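(* Let $1<p<\infty$, $q=\max\bigl(p,\tfrac{p}{p-1}\bigr)$ and $\delta=\frac{1}{2q}$. For $n\ge 1$ let \[ \mathcal{Z}(2n)=\{e^{2\pi i j/(2n+1)}\}_{j=0}^{n}\cup\{e^{-2\pi i (j-2\delta)/(2n+1)}\}_{j=1}^{n}=\{z_{(2n)k}\}_{k=0}^{2n}, \] and let $F_{2n}(z)=\prod_{k=0}^{2n}\bigl(1-\tfrac{2n}{2n+1}\overline{z_{(2n)k}}\,z\bigr)$. Let $I=\{e^{it}:0<t<\pi\}$ (so $|I|=\pi$). Then \[ \Bigl(\frac{1}{|I|}\int_{I}|F_{2n}(e^{i\theta})|^{p}\,d\theta\Bigr)^{1/p}\Bigl(\frac{1}{|I|}\int_{I}|F_{2n}(e^{i\theta})|^{-p/(p-1)}\,d\theta\Bigr)^{(p-1)/p}\longrightarrow\infty \quad (n\to\infty); \] in particular the weights $|F_{2n}|^p$ do not satisfy a uniform Muckenhoupt $(A_p)$ condition. (Each point of $\mathcal{Z}(2n)$, suitably indexed, satisfies $|\arg(z\,\overline{e^{2\pi i\delta/(2n+1)}\omega_{(2n)k}})|\le\frac{2\pi\delta}{2n+1}$, i.e. $\mathcal{Z}(2n)$ is an angular perturbation of size $\delta$ of the rotated $(2n+1)$th roots of unity.)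
   Context: $\omega_{mk}=e^{2\pi i k/(m+1)}$ denote the $(m+1)$th roots of unity. A family of nonnegative functions $w_n$ on the unit circle satisfies a uniform $(A_p)$ condition if there is $K$ with $\bigl(\frac{1}{|I|}\int_I w_n\bigr)^{1/p}\bigl(\frac{1}{|I|}\int_I w_n^{-1/(p-1)}\bigr)^{(p-1)/p}\le K$ for all subarcs $I$ and all $n$ (here applied with $w_n=|F_{2n}|^p$). *)

From Stdlib Require Import Reals Lra List.
Open Scope R_scope.

Definition qexp (p : R) : R := Rmax p (p / (p - 1)).
Definition delta (p : R) : R := 1 / (2 * qexp p).

(* Arguments of the points z_{(2n)k}, k = 0..2n:
   k = j in 0..n      : 2 pi j/(2n+1)
   k = n + j, j=1..n  : -2 pi (j - 2 delta)/(2n+1) *)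
Definition zarg (p : R) (n k : nat) : R :=
  if Nat.leb k n then 2 * PI * INR k / (2 * INR n + 1)
  else - (2 * PI * (INR (k - n) - 2 * delta p)) / (2 * INR n + 1).

Definition rad (n : nat) : R := 2 * INR n / (2 * INR n + 1).

(* |1 - r * conj(e^{i a}) * e^{i t}| = sqrt(1 - 2 r cos(t - a) + r^2) *)
Definition factor_abs (r a t : R) : R := sqrt (1 - 2 * r * cos (t - a) + r ^ 2).

Definition absF (p : R) (n : nat) (t : R) : R :=
  fold_right Rmult 1
    (map (fun k => factor_abs (rad n) (zarg p n k) t) (seq 0 (2 * n + 1))).

Definition wp (p : R) (n : nat) (t : R) : R := Rpower (absF p n t) p.
Definition wdual (p : R) (n : nat) (t : R) : R := Rpower (absF p n t) (- (p / (p - 1))).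

From Stdlib Require Import Reals Lra Lia List.
Open Scope R_scope.

(* Write N = 2n+1, h = 2 pi / N, r = 2n/N and theta = 2 delta.
   Then log |F_{2n}(e^{it})| = U(t) + D(t), where U is the log-modulus of the
   product over the unperturbed rotated roots of unity (so U is h-periodic) and
   D collects the differences caused by moving the last n points by theta h.
   Since t |-> log|1 - r e^{it}| is concave away from the origin, chord
   estimates show: near t = pi, D(t) >= -theta log(dist to pi) (up to
   constants), and near t = 0, D(t) <= theta log(dist to 0).  Cutting [0, pi]
   into period blocks, the integral of |F|^p over the blocks left of pi is at
   least (sum_i ((i+2)h)^{-theta p}) * int_0^h e^{pU} (up to constants), and
   similarly the integral of |F|^{-p'}, p' = p/(p-1), over the blocks right of 0.  Hoelder's inequality on one period gives
   (int_0^h e^{pU})^{1/p} (int_0^h e^{-p'U})^{1/p'} >= h, and since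
   theta p = 1 or theta p' = 1, one of the two block sums is a harmonic sum of
   size (log n)/h while the other is of size n.  Hence the logarithm of the
   (A_p) characteristic is >= min(1/p, 1/p') log(log n) - C. *)

Fixpoint rsum (f : nat -> R) (m : nat) : R :=
  match m with O => 0 | S k => rsum f k + f k end.

Lemma rsum_ext f g m : (forall i, (i < m)%nat -> f i = g i) -> rsum f m = rsum g m.
Proof. induction m; intros H; simpl; auto. rewrite IHm, H; auto. Qed.

Lemma rsum_le f g m : (forall i, (i < m)%nat -> f i <= g i) -> rsum f m <= rsum g m.
Proof. induction m; intros H; simpl; [lra|]. apply Rplus_le_compat; auto. Qed.

Lemma rsum_minus f g m : rsum (fun i => f i - g i) m = rsum f m - rsum g m.
Proof. induction m; simpl; [lra|]. rewrite IHm; ring. Qed.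

Lemma rsum_scal c f m : rsum (fun i => c * f i) m = c * rsum f m.
Proof. induction m; simpl; [lra|]. rewrite IHm; ring. Qed.

Lemma rsum_const c m : rsum (fun _ => c) m = INR m * c.
Proof. induction m; simpl rsum; [simpl; lra|]. rewrite IHm, S_INR; ring. Qed.

Lemma rsum_shift f m : rsum f (S m) = f O + rsum (fun i => f (S i)) m.
Proof. induction m; simpl in *; [lra|]. rewrite IHm; ring. Qed.

Lemma rsum_app f a b : rsum f (a + b) = rsum f a + rsum (fun i => f (a + i)%nat) b.
Proof.
  induction b; simpl; [rewrite Nat.add_0_r; ring|].
  rewrite Nat.add_succ_r; simpl; rewrite IHb; ring.
Qed.

Lemma rsum_telescope f m : rsum (fun i => f i - f (S i)) m = f O - f m.
Proof. induction m; simpl; [lra|]. rewrite IHm; ring. Qed.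

Lemma rsum_rev f m : rsum f m = rsum (fun j => f (m - 1 - j)%nat) m.
Proof.
  induction m; [reflexivity|].
  rewrite (rsum_shift (fun j => f (S m - 1 - j)%nat)).
  change (rsum f (S m)) with (rsum f m + f m). rewrite IHm.
  replace (f (S m - 1 - 0)%nat) with (f m) by (f_equal; lia).
  rewrite Rplus_comm. f_equal. apply rsum_ext; intros; f_equal; lia.
Qed.

Lemma prod_exp (F psi : nat -> R) m s : (forall k, F k = exp (psi k)) ->
  fold_right Rmult 1 (map F (seq s m)) = exp (rsum (fun i => psi (s + i)%nat) m).
Proof.
  revert s; induction m; intros s H; [simpl; rewrite exp_0; auto|].
  cbn [seq map fold_right]. rewrite IHm by auto.
  rewrite (rsum_shift (fun i => psi (s + i)%nat)), exp_plus, H, Nat.add_0_r.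
  do 2 f_equal. apply rsum_ext; intros; f_equal; lia.
Qed.

Lemma rsum_continuity (F : nat -> R -> R) m : (forall i, continuity (F i)) ->
  continuity (fun t => rsum (fun i => F i t) m).
Proof.
  intros H; induction m; simpl.
  - apply continuity_const; intros x y; auto.
  - apply (continuity_plus (fun t => rsum (fun i => F i t) m) (F m)); auto.
Qed.

Lemma ln_le x y : 0 < x -> x <= y -> ln x <= ln y.
Proof. intros H1 [H2| ->]; [left; apply ln_increasing; auto|lra]. Qed.

Lemma exp_le x y : x <= y -> exp x <= exp y.
Proof. intros [H| ->]; [left; apply exp_increasing; auto|lra]. Qed.

(* One factor: sqmod r x = |1 - r e^{ix}|^2 and logfac r x = log |1 - r e^{ix}|. *)

Definition sqmod (r x : R) : R := 1 - 2 * r * cos x + r ^ 2.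
Definition logfac (r x : R) : R := ln (sqmod r x) / 2.
Definition dlogfac (r x : R) : R := r * sin x / sqmod r x.
Definition d2logfac (r x : R) : R := r * ((1 + r ^ 2) * cos x - 2 * r) / (sqmod r x) ^ 2.

Lemma sqmod_alt r x : sqmod r x = (1 - r) ^ 2 + 2 * r * (1 - cos x).
Proof. unfold sqmod; ring. Qed.

Lemma sqmod_pos r x : 0 < r < 1 -> 0 < sqmod r x.
Proof.
  intros Hr; rewrite sqmod_alt. destruct (COS_bound x).
  assert (0 < (1 - r) ^ 2) by (apply pow_lt; lra). nra.
Qed.

Lemma logfac_per r x : logfac r (x + 2 * PI) = logfac r x.
Proof. unfold logfac, sqmod. rewrite cos_plus, cos_2PI, sin_2PI. do 3 f_equal; ring. Qed.

Lemma logfac_neg r x : logfac r (- x) = logfac r x.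
Proof. unfold logfac, sqmod. rewrite cos_neg. auto. Qed.

Lemma logfac_bounds r x : 0 < r < 1 -> ln (1 - r) <= logfac r x <= ln 2.
Proof.
  intros Hr. assert (Hp := sqmod_pos r x Hr). destruct (COS_bound x).
  assert (Hl : ln ((1 - r) ^ 2) <= ln (sqmod r x)).
  { apply ln_le; [apply pow_lt; lra|]. rewrite sqmod_alt. nra. }
  assert (Hu : ln (sqmod r x) <= ln (2 ^ 2)) by (apply ln_le; auto; unfold sqmod; simpl; nra).
  rewrite ln_pow in Hl, Hu by lra. simpl (INR 2) in Hl, Hu. unfold logfac. lra.
Qed.

Lemma logfac_nonneg r x : 0 < r < 1 -> cos x <= 0 -> 0 <= logfac r x.
Proof.
  intros Hr Hc. unfold logfac.
  assert (H : ln 1 <= ln (sqmod r x)) by (apply ln_le; unfold sqmod; nra).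
  rewrite ln_1 in H. lra.
Qed.

Lemma logfac_small r y w : 0 < r < 1 -> 0 <= y <= PI / 2 -> 1 - r <= w -> y <= w ->
  logfac r y <= ln w + ln 2 / 2.
Proof.
  intros Hr Hy H1 H2.
  assert (Hc : 1 - y ^ 2 / 2 <= cos y).
  { destruct (cos_bound y 0 ltac:(lra) ltac:(lra)) as [Hb _].
    replace (cos_approx y (2 * 0 + 1)) with (1 - y ^ 2 / 2) in Hb; [exact Hb|].
    unfold cos_approx, cos_term. simpl. field. }
  assert (HG : sqmod r y <= 2 * w ^ 2) by (rewrite sqmod_alt; nra).
  assert (H : ln (sqmod r y) <= ln (2 * w ^ 2)) by (apply ln_le; [apply sqmod_pos|]; auto).
  rewrite ln_mult, ln_pow in H by (try apply pow_lt; lra). simpl (INR 2) in H.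
  unfold logfac. lra.
Qed.

Lemma sqmod_deriv r x : derivable_pt_lim (sqmod r) x (2 * r * sin x).
Proof.
  assert (H := derivable_pt_lim_scal cos (-2 * r) x (- sin x) (derivable_pt_lim_cos x)).
  assert (H2 := derivable_pt_lim_plus (fct_cte (1 + r ^ 2)) _ x 0 _
                  (derivable_pt_lim_const (1 + r ^ 2) x) H).
  replace (2 * r * sin x) with (0 + -2 * r * - sin x) by ring.
  eapply derivable_pt_lim_ext; [|exact H2].
  intros z; unfold sqmod, plus_fct, mult_real_fct, fct_cte; ring.
Qed.

Lemma logfac_deriv r x : 0 < r < 1 -> derivable_pt_lim (logfac r) x (dlogfac r x).
Proof.
  intros Hr. assert (Hp := sqmod_pos r x Hr).
  assert (H2 : derivable_pt_lim (fun y => ln y * / 2) (sqmod r x) (/ sqmod r x * / 2))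
    by (apply (derivable_pt_lim_scal_right ln), derivable_pt_lim_ln; auto).
  assert (H3 := derivable_pt_lim_comp _ _ x _ _ (sqmod_deriv r x) H2).
  replace (dlogfac r x) with (/ sqmod r x * / 2 * (2 * r * sin x))
    by (unfold dlogfac; field; lra).
  eapply derivable_pt_lim_ext; [|exact H3]. intros z; unfold logfac, comp; lra.
Qed.

Lemma dlogfac_deriv r x : 0 < r < 1 -> derivable_pt_lim (dlogfac r) x (d2logfac r x).
Proof.
  intros Hr. assert (Hp := sqmod_pos r x Hr).
  assert (Hs : derivable_pt_lim (fun y => r * sin y) x (r * cos x))
    by (apply (derivable_pt_lim_scal sin r x (cos x)), derivable_pt_lim_sin).
  assert (H := derivable_pt_lim_div _ _ x _ _ Hs (sqmod_deriv r x) ltac:(lra)).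
  replace (d2logfac r x)
    with ((r * cos x * sqmod r x - 2 * r * sin x * (r * sin x)) / (sqmod r x)²).
  - eapply derivable_pt_lim_ext; [|exact H]. intros z; reflexivity.
  - unfold d2logfac, Rsqr. assert (Hsc := sin2_cos2 x). unfold Rsqr in Hsc.
    field_simplify; [|lra|lra]. f_equal. unfold sqmod. nra.
Qed.

Lemma logfac_continuity r : 0 < r < 1 -> continuity (logfac r).
Proof.
  intros Hr x. apply derivable_continuous_pt. exists (dlogfac r x). apply logfac_deriv; auto.
Qed.

(* The sign condition d2logfac r <= 0 on [lo, hi], i.e. logfac r is concave there. *)
Definition concave_zone (r lo hi : R) : Prop :=
  forall y, lo <= y <= hi -> (1 + r ^ 2) * cos y <= 2 * r.

Lemma dlogfac_decreasing r lo hi a b : 0 < r < 1 -> concave_zone r lo hi ->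
  lo <= a -> a <= b -> b <= hi -> dlogfac r b <= dlogfac r a.
Proof.
  intros Hr Hz H1 H2 H3. destruct (Req_dec a b) as [->|Hne]; [lra|].
  destruct (MVT_cor2 (dlogfac r) (d2logfac r) a b ltac:(lra)) as [c [Hc1 Hc2]].
  { intros; apply dlogfac_deriv; auto. }
  assert (d2logfac r c <= 0).
  { unfold d2logfac. assert (Hp := sqmod_pos r c Hr). assert (Hc := Hz c ltac:(lra)).
    apply Rmult_le_reg_r with (sqmod r c ^ 2); [apply pow_lt; lra|].
    unfold Rdiv; rewrite Rmult_assoc, Rinv_l, Rmult_0_l by (apply pow_nonzero; lra). nra. }
  nra.
Qed.

Lemma logfac_slopes r lo hi a b c : 0 < r < 1 -> concave_zone r lo hi ->
  lo <= a -> a < b -> b < c -> c <= hi ->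
  (logfac r c - logfac r b) * (b - a) <= (logfac r b - logfac r a) * (c - b).
Proof.
  intros Hr Hz H1 H2 H3 H4.
  destruct (MVT_cor2 (logfac r) (dlogfac r) a b H2) as [u [Eu Hu]];
    [intros; apply logfac_deriv; auto|].
  destruct (MVT_cor2 (logfac r) (dlogfac r) b c H3) as [v [Ev Hv]];
    [intros; apply logfac_deriv; auto|].
  assert (Hm : dlogfac r v <= dlogfac r u) by (apply (dlogfac_decreasing r lo hi); auto; lra).
  rewrite Eu, Ev.
  assert (0 <= (dlogfac r u - dlogfac r v) * ((c - b) * (b - a)))
    by (apply Rmult_le_pos; [lra|apply Rmult_le_pos; lra]).
  nra.
Qed.

Lemma chord_lower r lo hi e h x : 0 < r < 1 -> concave_zone r lo hi ->
  0 < e < h -> lo <= x - h -> x <= hi ->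
  e / h * (logfac r (x - h) - logfac r x) <= logfac r (x - e) - logfac r x.
Proof.
  intros Hr Hz He H1 H2.
  assert (S := logfac_slopes r lo hi (x - h) (x - e) x Hr Hz H1 ltac:(lra) ltac:(lra) H2).
  apply Rmult_le_reg_l with h; [lra|].
  replace (h * (e / h * (logfac r (x - h) - logfac r x)))
    with (e * (logfac r (x - h) - logfac r x)) by (field; lra).
  nra.
Qed.

Lemma chord_upper r lo hi e h x : 0 < r < 1 -> concave_zone r lo hi ->
  0 < e -> 0 < h -> lo <= x - e -> x + h <= hi ->
  logfac r (x - e) - logfac r x <= e / h * (logfac r x - logfac r (x + h)).
Proof.
  intros Hr Hz He Hh H1 H2.
  assert (S := logfac_slopes r lo hi (x - e) x (x + h) Hr Hz H1 ltac:(lra) ltac:(lra) H2).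
  apply Rmult_le_reg_l with h; [lra|].
  replace (h * (e / h * (logfac r x - logfac r (x + h))))
    with (e * (logfac r x - logfac r (x + h))) by (field; lra).
  nra.
Qed.

Definition npts (n : nat) : R := 2 * INR n + 1.
Definition step (n : nat) : R := 2 * PI / npts n.
Definition theta (p : R) : R := 2 * delta p.
Definition shift (p : R) (n : nat) : R := theta p * step n.
Definition pconj (p : R) : R := p / (p - 1).

Lemma PI_gt3 : 3 < PI.
Proof. assert (H := PI2_3_2). lra. Qed.

Lemma npts_ge3 n : (1 <= n)%nat -> 3 <= npts n.
Proof. intros H; unfold npts. apply le_INR in H. simpl in H. lra. Qed.

Lemma step_pos n : (1 <= n)%nat -> 0 < step n.
Proof.
  intros H; unfold step. assert (Hn := npts_ge3 n H). assert (HP := PI_gt3).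
  apply Rdiv_lt_0_compat; lra.
Qed.

Lemma step_npts n : (1 <= n)%nat -> step n * npts n = 2 * PI.
Proof. intros H; unfold step. assert (Hn := npts_ge3 n H). field. lra. Qed.

Lemma n_step n : (1 <= n)%nat -> INR n * step n = PI - step n / 2.
Proof. intros H; assert (E := step_npts n H). unfold npts in E. lra. Qed.

Lemma step_le n : (1 <= n)%nat -> step n <= 2 * PI / 3.
Proof.
  intros H; assert (E := step_npts n H). assert (Hn := npts_ge3 n H).
  assert (Hh := step_pos n H). assert (HP := PI_gt3). nra.
Qed.

Lemma step_le2 n : (2 <= n)%nat -> step n <= 2 * PI / 5.
Proof.
  intros H; assert (H1 : (1 <= n)%nat) by lia. assert (E := step_npts n H1).
  apply le_INR in H. simpl in H. unfold npts in E. assert (Hh := step_pos n H1).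
  assert (HP := PI_gt3). nra.
Qed.

Lemma rad_eq n : (1 <= n)%nat -> rad n = 1 - 1 / npts n.
Proof. intros H; unfold rad. assert (Hn := npts_ge3 n H). unfold npts in *. field. lra. Qed.

Lemma rad_bounds n : (1 <= n)%nat -> 0 < rad n < 1.
Proof.
  intros H; rewrite rad_eq by auto. assert (Hn := npts_ge3 n H).
  assert (0 < 1 / npts n <= 1 / 3).
  { split; [apply Rdiv_lt_0_compat; lra|].
    apply Rmult_le_reg_r with (npts n); [lra|]. field_simplify; lra. }
  lra.
Qed.

Lemma one_minus_rad n : (1 <= n)%nat -> 1 - rad n <= step n / 2.
Proof.
  intros H; rewrite rad_eq by auto. unfold step. assert (Hn := npts_ge3 n H).
  assert (HP := PI_gt3). assert (0 < / npts n) by (apply Rinv_0_lt_compat; lra).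
  unfold Rdiv. replace (1 - (1 - 1 * / npts n)) with (/ npts n) by ring.
  replace (2 * PI * / npts n * / 2) with (PI * / npts n) by (field; lra). nra.
Qed.

Lemma pconj_gt1 p : 1 < p -> 1 < pconj p.
Proof.
  intros Hp; unfold pconj. apply Rmult_lt_reg_r with (p - 1); [lra|].
  unfold Rdiv; rewrite Rmult_assoc, Rinv_l; lra.
Qed.

Lemma qexp_ge2 p : 1 < p -> 2 <= qexp p.
Proof.
  intros Hp. assert (Hq : p <= qexp p /\ pconj p <= qexp p) by (split; [apply Rmax_l|apply Rmax_r]).
  destruct (Rle_lt_dec 2 p); [lra|].
  assert (2 <= pconj p); [|lra].
  unfold pconj. apply Rmult_le_reg_r with (p - 1); [lra|].
  unfold Rdiv; rewrite Rmult_assoc, Rinv_l; lra.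
Qed.

Lemma theta_eq p : 1 < p -> theta p = 1 / qexp p.
Proof. intros Hp; unfold theta, delta. assert (H := qexp_ge2 p Hp). field. lra. Qed.

Lemma theta_bounds p : 1 < p -> 0 < theta p <= 1 / 2.
Proof.
  intros Hp; rewrite theta_eq by auto. assert (H := qexp_ge2 p Hp).
  split; [apply Rdiv_lt_0_compat; lra|].
  apply Rmult_le_reg_r with (qexp p); [lra|]. field_simplify; lra.
Qed.

Lemma theta_exponents p : 1 < p ->
  0 < theta p * p <= 1 /\ 0 < theta p * pconj p <= 1 /\
  (theta p * p = 1 \/ theta p * pconj p = 1).
Proof.
  intros Hp. assert (Hq := qexp_ge2 p Hp). assert (Hc := pconj_gt1 p Hp).
  assert (Hpq : p <= qexp p /\ pconj p <= qexp p) by (split; [apply Rmax_l|apply Rmax_r]).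
  rewrite theta_eq by auto.
  assert (Hle : forall x, 0 < x <= qexp p -> 0 < 1 / qexp p * x <= 1).
  { intros x Hx. split; [apply Rmult_lt_0_compat; [apply Rdiv_lt_0_compat|]; lra|].
    apply Rmult_le_reg_r with (qexp p); [lra|]. field_simplify; lra. }
  split; [apply Hle; lra|]. split; [apply Hle; lra|].
  unfold qexp; fold (pconj p).
  apply Rmax_case; [left|right]; field; lra.
Qed.

(* Ulog is the log-modulus over the 2n+1 rotated roots of unity e^{ikh}, k = -n..n;
   Dlog is the change caused by shifting the last n points e^{-ijh} by e = theta h. *)

Definition Ulog (n : nat) (t : R) : R :=
  rsum (fun k => logfac (rad n) (t - INR k * step n)) (n + 1)
  + rsum (fun i => logfac (rad n) (t + INR (S i) * step n)) n.

Definition Dlog (p : R) (n : nat) (t : R) : R :=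
  rsum (fun i => logfac (rad n) (t + INR (S i) * step n - shift p n)
                 - logfac (rad n) (t + INR (S i) * step n)) n.

Definition logF (p : R) (n : nat) (t : R) : R := Ulog n t + Dlog p n t.

Lemma sqrt_exp x : 0 < x -> sqrt x = exp (ln x / 2).
Proof.
  intros H. rewrite <- (sqrt_square (exp (ln x / 2))) by (left; apply exp_pos).
  f_equal. rewrite <- exp_plus, <- (exp_ln x H) at 1. f_equal; field.
Qed.

Lemma absF_eq p n t : (1 <= n)%nat -> absF p n t = exp (logF p n t).
Proof.
  intros Hn. assert (Hr := rad_bounds n Hn). assert (HN := npts_ge3 n Hn). unfold npts in HN.
  unfold absF. rewrite (prod_exp _ (fun k => logfac (rad n) (t - zarg p n k)))
    by (intros k; unfold factor_abs; rewrite sqrt_exp by (apply sqmod_pos; auto); reflexivity).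
  f_equal. replace (2 * n + 1)%nat with ((n + 1) + n)%nat by lia.
  rewrite rsum_app. unfold logF, Ulog, Dlog. rewrite rsum_minus.
  assert (E1 : rsum (fun i => logfac (rad n) (t - zarg p n (0 + i))) (n + 1)
             = rsum (fun k => logfac (rad n) (t - INR k * step n)) (n + 1)).
  { apply rsum_ext; intros i Hi. rewrite Nat.add_0_l. unfold zarg.
    replace (Nat.leb i n) with true by (symmetry; apply Nat.leb_le; lia).
    f_equal. unfold step, npts. field. lra. }
  assert (E2 : rsum (fun i => logfac (rad n) (t - zarg p n (0 + (n + 1 + i)))) n
             = rsum (fun i => logfac (rad n) (t + INR (S i) * step n - shift p n)) n).
  { apply rsum_ext; intros i Hi. rewrite Nat.add_0_l. unfold zarg.
    replace (Nat.leb (n + 1 + i) n) with false by (symmetry; apply Nat.leb_gt; lia).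
    replace (n + 1 + i - n)%nat with (S i) by lia.
    f_equal. unfold shift, theta, step, npts. field. lra. }
  rewrite E1, E2. ring.
Qed.

(* Ulog is step-periodic: translating by h permutes the 2n+1 roots of unity. *)
Lemma Ulog_periodic n t : (1 <= n)%nat -> Ulog n (t + step n) = Ulog n t.
Proof.
  intros Hn. unfold Ulog. set (h := step n). set (r := rad n).
  set (phi := fun j => logfac r (t + INR j * h)).
  replace (n + 1)%nat with (S n) by lia.
  rewrite (rsum_shift (fun k => logfac r (t + h - INR k * h))).
  assert (E1 : rsum (fun i => logfac r (t + h - INR (S i) * h)) n
             = rsum (fun k => logfac r (t - INR k * h)) n)
    by (apply rsum_ext; intros; f_equal; rewrite S_INR; ring).
  assert (E2 : rsum (fun i => logfac r (t + h + INR (S i) * h)) n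
             = rsum (fun i => phi (S (S i))) n)
    by (apply rsum_ext; intros; unfold phi; f_equal; rewrite !S_INR; ring).
  assert (E3 := rsum_shift (fun i => phi (S i)) n). simpl in E3.
  assert (E4 : phi (S n) = logfac r (t - INR n * h)).
  { unfold phi. rewrite <- (logfac_per r (t - INR n * h)). f_equal.
    assert (E := step_npts n Hn). fold h in E. unfold npts in E. rewrite S_INR. lra. }
  replace (logfac r (t + h - INR 0 * h)) with (phi 1%nat) by (unfold phi; f_equal; simpl; ring).
  rewrite E1, E2. change (rsum (fun i => logfac r (t + INR (S i) * h)) n)
    with (rsum (fun i => phi (S i)) n).
  simpl (rsum (fun k => logfac r (t - INR k * h)) (S n)). lra.
Qed.

Lemma Ulog_bounds n t : (1 <= n)%nat ->
  INR (n + 1 + n) * ln (1 - rad n) <= Ulog n t <= INR (n + 1 + n) * ln 2.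
Proof.
  intros Hn. assert (Hr := rad_bounds n Hn). unfold Ulog.
  rewrite plus_INR, Rmult_plus_distr_r, Rmult_plus_distr_r, <- !rsum_const.
  split; apply Rplus_le_compat; apply rsum_le; intros; apply logfac_bounds; auto.
Qed.

Lemma continuity_ext f g : (forall x, f x = g x) -> continuity f -> continuity g.
Proof. intros E H x. apply (continuity_pt_locally_ext f g 1 x); auto; lra. Qed.

Lemma logfac_shift_continuity n c : (1 <= n)%nat ->
  continuity (fun t => logfac (rad n) (t + c)).
Proof.
  intros Hn. apply (continuity_comp (fun t => t + c) (logfac (rad n)));
    [|apply logfac_continuity, rad_bounds; auto].
  apply (continuity_plus id (fct_cte c));
    [apply derivable_continuous, derivable_id|apply continuity_const; intros ? ?; auto].
Qed.

Lemma Ulog_continuity n : (1 <= n)%nat -> continuity (Ulog n).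
Proof.
  intros Hn. unfold Ulog.
  apply continuity_plus; apply rsum_continuity; intros i;
    [apply (logfac_shift_continuity n (- (INR i * step n)) Hn)|apply logfac_shift_continuity; auto].
Qed.

Lemma logF_continuity p n : (1 <= n)%nat -> continuity (logF p n).
Proof.
  intros Hn. unfold logF, Dlog.
  apply continuity_plus; [apply Ulog_continuity; auto|].
  apply rsum_continuity; intros i. apply continuity_minus; [|apply logfac_shift_continuity; auto].
  apply (continuity_ext (fun t => logfac (rad n) (t + (INR (S i) * step n - shift p n))));
    [intros t; f_equal; ring|apply logfac_shift_continuity; auto].
Qed.

Lemma cos_le_half n y : (1 <= n)%nat -> step n / 2 <= y <= 2 * PI - step n / 2 ->
  cos y <= cos (step n / 2).
Proof.
  intros Hn Hy. assert (Hh := step_pos n Hn). assert (Hh2 := step_le n Hn).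
  assert (HP := PI_gt3).
  destruct (Rle_lt_dec y PI).
  - destruct (Req_dec y (step n / 2)) as [->|]; [lra|].
    left; apply cos_decreasing_1; lra.
  - replace (cos y) with (cos (2 * PI - y)).
    2:{ replace (2 * PI - y) with (- y + 2 * PI) by ring.
        rewrite cos_plus, cos_2PI, sin_2PI, cos_neg. ring. }
    destruct (Req_dec (2 * PI - y) (step n / 2)) as [->|]; [lra|].
    left; apply cos_decreasing_1; lra.
Qed.

(* Away from half a step around the origin, logfac (rad n) is concave:
   with u = 1/N, cos y <= cos(pi u) <= 1 - 3.6 u^2, which beats 2r/(1+r^2). *)
Lemma concave_away_from_0 n : (1 <= n)%nat ->
  concave_zone (rad n) (step n / 2) (2 * PI - step n / 2).
Proof.
  intros Hn y Hy. assert (Hc := cos_le_half n y Hn Hy).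
  assert (Hh := step_pos n Hn). assert (HP := PI_gt3). assert (HP4 := PI_4).
  assert (HN := npts_ge3 n Hn).
  set (a := step n / 2) in *. set (u := 1 / npts n).
  assert (Ha : a = PI / npts n) by (unfold a, step; field; lra).
  assert (Hr : rad n = 1 - u) by (rewrite rad_eq; auto).
  assert (Hu : 0 < u <= 1 / 3).
  { unfold u; split; [apply Rdiv_lt_0_compat; lra|].
    apply Rmult_le_reg_r with (npts n); [lra|]. field_simplify; lra. }
  assert (Hau : 3 * u <= a).
  { rewrite Ha. unfold u, Rdiv. rewrite Rmult_1_l.
    apply Rmult_le_compat_r; [left; apply Rinv_0_lt_compat|]; lra. }
  assert (Ha43 : a <= 4 / 3).
  { rewrite Ha. apply Rmult_le_reg_r with (npts n); [lra|].
    unfold Rdiv; rewrite Rmult_assoc, Rinv_l; nra. }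
  assert (Hcb : cos a <= 1 - a ^ 2 / 2 + a ^ 4 / 24).
  { destruct (cos_bound a 0 ltac:(lra) ltac:(lra)) as [_ Hb].
    replace (cos_approx a (2 * (0 + 1))) with (1 - a ^ 2 / 2 + a ^ 4 / 24) in Hb; [exact Hb|].
    unfold cos_approx, cos_term. simpl. field. }
  assert (Hc2 : cos y <= 1 - 36 / 10 * u ^ 2).
  { assert (a ^ 4 / 24 <= a ^ 2 * (16 / 9) / 24).
    { replace (a ^ 4) with (a ^ 2 * a ^ 2) by ring.
      assert (a ^ 2 <= 16 / 9) by nra. assert (0 <= a ^ 2) by nra. nra. }
    assert (9 * u ^ 2 <= a ^ 2) by nra. nra. }
  rewrite Hr. assert (0 <= 1 + (1 - u) ^ 2) by nra.
  assert ((1 + (1 - u) ^ 2) * cos y <= (1 + (1 - u) ^ 2) * (1 - 36 / 10 * u ^ 2))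
    by (apply Rmult_le_compat_l; auto).
  nra.
Qed.

Lemma shift_bounds p n : 1 < p -> (1 <= n)%nat ->
  shift p n / step n = theta p /\ 0 < shift p n <= step n / 2.
Proof.
  intros Hp Hn. assert (Hh := step_pos n Hn). assert (Ht := theta_bounds p Hp).
  unfold shift. split; [field; lra|]. split; [apply Rmult_lt_0_compat; lra|nra].
Qed.

(* Near pi the perturbation is bounded below by theta times a telescoped chord:
   Dlog(t) >= theta (logfac t - logfac (t + n h)). *)
Lemma Dlog_lower p n t : 1 < p -> (1 <= n)%nat -> PI / 2 <= t <= PI ->
  theta p * (logfac (rad n) t - logfac (rad n) (t + INR n * step n)) <= Dlog p n t.
Proof.
  intros Hp Hn Ht. destruct (shift_bounds p n Hp Hn) as [Eh He].
  assert (Hh := step_pos n Hn). assert (Hh2 := step_le n Hn). assert (HP := PI_gt3).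
  assert (Enh := n_step n Hn). assert (Hr := rad_bounds n Hn).
  assert (Hz := concave_away_from_0 n Hn).
  unfold Dlog. set (h := step n) in *. set (r := rad n) in *. set (e := shift p n) in *.
  apply Rle_trans with
    (rsum (fun i => e / h * (logfac r (t + INR i * h) - logfac r (t + INR (S i) * h))) n).
  - rewrite rsum_scal, (rsum_telescope (fun j => logfac r (t + INR j * h))), Eh.
    simpl (INR 0). replace (t + 0 * h) with t by ring. lra.
  - apply rsum_le; intros i Hi.
    assert (0 <= INR i) by apply pos_INR. assert (INR (S i) <= INR n) by (apply le_INR; lia).
    replace (t + INR i * h) with (t + INR (S i) * h - h) by (rewrite S_INR; ring).
    apply (chord_lower r (h / 2) (2 * PI - h / 2)); auto; try lra; rewrite S_INR in *; nra.
Qed.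

Lemma Dlog_upper p n t : 1 < p -> (2 <= n)%nat -> 0 <= t <= PI / 2 ->
  Dlog p n t <= theta p * (logfac (rad n) (t + step n) - logfac (rad n) (t + INR (S n) * step n)).
Proof.
  intros Hp Hn2 Ht. assert (Hn : (1 <= n)%nat) by lia.
  destruct (shift_bounds p n Hp Hn) as [Eh He].
  assert (Hh := step_pos n Hn). assert (Hh2 := step_le2 n Hn2). assert (HP := PI_gt3).
  assert (Enh := n_step n Hn). assert (Hr := rad_bounds n Hn).
  assert (Hz := concave_away_from_0 n Hn).
  unfold Dlog. set (h := step n) in *. set (r := rad n) in *. set (e := shift p n) in *.
  apply Rle_trans with
    (rsum (fun i => e / h * (logfac r (t + INR (S i) * h) - logfac r (t + INR (S (S i)) * h))) n).
  - apply rsum_le; intros i Hi.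
    assert (0 <= INR i) by apply pos_INR. assert (INR (S i) <= INR n) by (apply le_INR; lia).
    assert (INR (S i) * h <= INR n * h) by (apply Rmult_le_compat_r; lra).
    replace (t + INR (S (S i)) * h) with (t + INR (S i) * h + h) by (rewrite (S_INR (S i)); ring).
    apply (chord_upper r (h / 2) (2 * PI - h / 2)); auto; try lra; rewrite S_INR in *; nra.
  - rewrite rsum_scal, (rsum_telescope (fun j => logfac r (t + INR (S j) * h))), Eh.
    simpl (INR 1). replace (t + 1 * h) with (t + h) by ring. lra.
Qed.

(* Pointwise lower bounds for the weights on period blocks.
   block_const g i h = (sqrt 2 (i+2) h)^(-g) bounds e^{p D} on the i-th block
   left of pi (with g = theta p) and e^{-p' D} on the i-th block right of 0
   (with g = theta p'). *)

Definition block_const (g : R) (i : nat) (h : R) : R :=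
  exp (- g * (ln ((INR i + 2) * h) + ln 2 / 2)).

Lemma block_near_pi p n i t : 1 < p -> (1 <= n)%nat -> (1 <= i)%nat ->
  (INR i + 3) * step n <= PI / 2 ->
  PI - (INR i + 1 / 2) * step n <= t <= PI - (INR i - 1 / 2) * step n ->
  block_const (theta p * p) i (step n) <= exp (p * Dlog p n t).
Proof.
  intros Hp Hn Hi Hib Ht.
  assert (Hh := step_pos n Hn). assert (HP := PI_gt3). assert (Enh := n_step n Hn).
  assert (Hr := rad_bounds n Hn). assert (H1r := one_minus_rad n Hn).
  assert (HI : 1 <= INR i) by (apply le_INR in Hi; simpl in Hi; lra).
  assert (Htp : PI / 2 <= t <= PI) by nra.
  assert (HD := Dlog_lower p n t Hp Hn Htp).
  assert (Hg0 : 0 <= logfac (rad n) t) by (apply logfac_nonneg; auto; apply cos_le_0; lra).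
  set (X := ln ((INR i + 2) * step n) + ln 2 / 2).
  (* t + n h is within (i+1) h of 2 pi, hence the factor there is small. *)
  assert (Hg1 : logfac (rad n) (t + INR n * step n) <= X).
  { replace (t + INR n * step n) with (- (PI - t + step n / 2) + 2 * PI) by lra.
    rewrite logfac_per, logfac_neg. apply logfac_small; auto; nra. }
  assert (Hth := theta_bounds p Hp).
  assert (H0 : - theta p * X <= Dlog p n t) by nra.
  unfold block_const. apply exp_le. fold X. nra.
Qed.

Lemma block_near_0 p n i t : 1 < p -> (2 <= n)%nat ->
  (INR i + 3) * step n <= PI / 2 ->
  INR i * step n <= t <= (INR i + 1) * step n ->
  block_const (theta p * pconj p) i (step n) <= exp (- pconj p * Dlog p n t).
Proof.
  intros Hp Hn2 Hib Ht. assert (Hn : (1 <= n)%nat) by lia.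
  assert (Hh := step_pos n Hn). assert (HP := PI_gt3). assert (Enh := n_step n Hn).
  assert (Hr := rad_bounds n Hn). assert (H1r := one_minus_rad n Hn).
  assert (HI : 0 <= INR i) by apply pos_INR.
  assert (Htp : 0 <= t <= PI / 2) by nra.
  assert (HD := Dlog_upper p n t Hp Hn2 Htp).
  (* t + (n+1) h lies in [pi, 3 pi / 2], where the factor has modulus >= 1. *)
  assert (Hg0 : 0 <= logfac (rad n) (t + INR (S n) * step n)).
  { apply logfac_nonneg; auto. rewrite S_INR.
    replace (t + (INR n + 1) * step n) with ((t + step n / 2) + PI) by lra.
    rewrite neg_cos. assert (0 <= cos (t + step n / 2)) by (apply cos_ge_0; nra). lra. }
  set (X := ln ((INR i + 2) * step n) + ln 2 / 2).
  assert (Hg1 : logfac (rad n) (t + step n) <= X) by (apply logfac_small; auto; nra).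
  assert (Hth := theta_bounds p Hp). assert (Hpc := pconj_gt1 p Hp).
  assert (H0 : Dlog p n t <= theta p * X) by nra.
  unfold block_const. apply exp_le. fold X. nra.
Qed.

(* Integrals of continuous functions.  cint f Hf a b is the Riemann integral of
   the continuous function f over [a, b] (and 0 when a > b); it does not depend
   on the integrability certificate, which makes the algebra below convenient. *)

Definition cint (f : R -> R) (Hf : continuity f) (a b : R) : R :=
  match Rle_dec a b with
  | left H => RiemannInt (@continuity_implies_RiemannInt f a b H (fun x _ => Hf x))
  | right _ => 0
  end.

Lemma cint_integrable f (Hf : continuity f) a b : a <= b -> Riemann_integrable f a b.
Proof. intros H. exact (@continuity_implies_RiemannInt f a b H (fun x _ => Hf x)). Qed.

Lemma cint_eq f Hf a b (pr : Riemann_integrable f a b) : a <= b -> RiemannInt pr = cint f Hf a b.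
Proof. intros H. unfold cint. destruct (Rle_dec a b); [apply RiemannInt_P5|lra]. Qed.

Ltac to_riemann f Hf a b H :=
  rewrite <- (cint_eq f Hf a b (cint_integrable f Hf a b H)) by exact H.

Lemma cint_ext f g Hf Hg a b : a <= b -> (forall x, a <= x <= b -> f x = g x) ->
  cint f Hf a b = cint g Hg a b.
Proof.
  intros H E. to_riemann f Hf a b H. to_riemann g Hg a b H.
  apply RiemannInt_P18; auto. intros; apply E; lra.
Qed.

Lemma cint_chasles f Hf a b c : a <= b -> b <= c -> cint f Hf a b + cint f Hf b c = cint f Hf a c.
Proof.
  intros H1 H2. assert (H3 : a <= c) by lra.
  to_riemann f Hf a b H1. to_riemann f Hf b c H2. to_riemann f Hf a c H3.
  apply RiemannInt_P26.
Qed.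

Lemma cint_mono f g Hf Hg a b : a <= b -> (forall x, a <= x <= b -> f x <= g x) ->
  cint f Hf a b <= cint g Hg a b.
Proof.
  intros H E. to_riemann f Hf a b H. to_riemann g Hg a b H.
  apply RiemannInt_P19; auto. intros; apply E; lra.
Qed.

Lemma cint_const c Hf a b : a <= b -> cint (fun _ => c) Hf a b = c * (b - a).
Proof.
  intros H. rewrite <- (cint_eq _ Hf a b (RiemannInt_P14 a b c)) by auto.
  apply RiemannInt_P15.
Qed.

Lemma cint_lb f Hf a b c : a <= b -> (forall x, a <= x <= b -> c <= f x) ->
  c * (b - a) <= cint f Hf a b.
Proof.
  intros H E. assert (Hc : continuity (fun _ : R => c)) by (apply continuity_const; intros ? ?; auto).
  rewrite <- (cint_const c Hc a b H). apply cint_mono; auto.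
Qed.

Lemma cint_sub f Hf a b c d : a <= c -> c <= d -> d <= b -> (forall x, 0 <= f x) ->
  cint f Hf c d <= cint f Hf a b.
Proof.
  intros H1 H2 H3 Hp.
  rewrite <- (cint_chasles f Hf a c b), <- (cint_chasles f Hf c d b) by lra.
  assert (0 * (c - a) <= cint f Hf a c) by (apply cint_lb; auto; lra).
  assert (0 * (b - d) <= cint f Hf d b) by (apply cint_lb; auto; lra).
  lra.
Qed.

Lemma cint_lin f g Hf Hg l (Hfg : continuity (fun x => f x + l * g x)) a b : a <= b ->
  cint (fun x => f x + l * g x) Hfg a b = cint f Hf a b + l * cint g Hg a b.
Proof.
  intros H. to_riemann f Hf a b H. to_riemann g Hg a b H. to_riemann (fun x => f x + l * g x) Hfg a b H.
  apply RiemannInt_P13.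
Qed.

Lemma cint_scal f Hf c (Hcf : continuity (fun x => c * f x)) a b : a <= b ->
  cint (fun x => c * f x) Hcf a b = c * cint f Hf a b.
Proof.
  intros H. assert (H0 : continuity (fun _ : R => 0)) by (apply continuity_const; intros ? ?; auto).
  assert (Hl : continuity (fun x => 0 + c * f x))
    by (apply (continuity_plus (fun _ => 0) (fun x => c * f x)); auto).
  rewrite (cint_ext _ (fun x => 0 + c * f x) Hcf Hl a b H) by (intros; ring).
  rewrite (cint_lin _ _ H0 Hf c Hl a b H), cint_const by auto. ring.
Qed.

Lemma cint_blocks f Hf a h M : 0 <= h ->
  cint f Hf a (a + INR M * h) = rsum (fun i => cint f Hf (a + INR i * h) (a + INR i * h + h)) M.
Proof.
  intros Hh. induction M.
  - simpl. replace (a + 0 * h) with a by ring.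
    assert (E := cint_chasles f Hf a a a (Rle_refl a) (Rle_refl a)). lra.
  - simpl rsum. rewrite <- IHM, S_INR.
    replace (a + (INR M + 1) * h) with (a + INR M * h + h) by ring.
    assert (0 <= INR M) by apply pos_INR.
    symmetry; apply cint_chasles; nra.
Qed.

Lemma cint_window_deriv f Hf h B a : 0 < h -> 0 <= a -> a + h < B ->
  exists Q : R -> R, (forall x, 0 <= x -> x + h <= B -> Q x = cint f Hf x (x + h)) /\
    forall x, 0 <= x -> x + h <= B -> derivable_pt_lim Q x (f (x + h) * 1 - f x).
Proof.
  intros Hh Ha HaB. assert (HB : 0 <= B) by lra.
  set (P := primitive HB (FTC_P1 HB (fun (x : R) (_ : 0 <= x <= B) => Hf x))).
  assert (HP : forall x, 0 <= x <= B -> P x = cint f Hf 0 x).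
  { intros x Hx. unfold P, primitive.
    destruct (Rle_dec 0 x); [|lra]. destruct (Rle_dec x B); [|lra]. apply cint_eq; lra. }
  assert (HD : forall x, 0 <= x <= B -> derivable_pt_lim P x (f x))
    by (intros x Hx; apply (@RiemannInt_P28 f 0 B x HB _ Hx)).
  exists (fun a => P (a + h) - P a). split.
  - intros x H1 H2. rewrite !HP by lra.
    rewrite <- (cint_chasles f Hf 0 x (x + h)) by lra. ring.
  - intros x H1 H2. apply (derivable_pt_lim_minus (fun a => P (a + h)) P); [|apply HD; lra].
    apply (derivable_pt_lim_comp (fun a => a + h) P x 1 (f (x + h))); [|apply HD; lra].
    replace 1 with (1 + 0) by ring.
    apply (derivable_pt_lim_plus id (fct_cte h)); [apply derivable_pt_lim_id|apply derivable_pt_lim_const].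
Qed.

Lemma cint_periodic f Hf h k : 0 < h -> (forall x, f (x + h) = f x) ->
  cint f Hf (INR k * h) (INR k * h + h) = cint f Hf 0 h.
Proof.
  intros Hh Hper. assert (Hk : 0 <= INR k) by apply pos_INR.
  destruct (Req_dec (INR k * h) 0) as [E|E]; [rewrite E; f_equal; ring|].
  assert (Hkh : 0 < INR k * h) by nra.
  destruct (cint_window_deriv f Hf h (INR k * h + h + 1) 0 Hh (Rle_refl 0) ltac:(lra))
    as [Q [HQ HQd]].
  destruct (MVT_cor2 Q (fun a => f (a + h) * 1 - f a) 0 (INR k * h) Hkh) as [c [Hc1 Hc2]].
  { intros c Hc. apply HQd; lra. }
  rewrite Hper in Hc1.
  rewrite <- (HQ (INR k * h)) by lra.
  replace (cint f Hf 0 h) with (cint f Hf 0 (0 + h)) by (f_equal; ring).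
  rewrite <- (HQ 0) by lra. lra.
Qed.

Lemma exp_c_continuity U c : continuity U -> continuity (fun t => exp (c * U t)).
Proof.
  intros H. apply (continuity_comp (fun t => c * U t) exp);
    [apply (continuity_scal U c H)|apply derivable_continuous, derivable_exp].
Qed.

Lemma exp_convex s u v : 0 <= s <= 1 ->
  exp (s * u + (1 - s) * v) <= s * exp u + (1 - s) * exp v.
Proof.
  intros Hs. set (m := s * u + (1 - s) * v).
  assert (E1 : exp u = exp m * exp (u - m)) by (rewrite <- exp_plus; f_equal; ring).
  assert (E2 : exp v = exp m * exp (v - m)) by (rewrite <- exp_plus; f_equal; ring).
  assert (H1 := exp_ineq1_le (u - m)). assert (H2 := exp_ineq1_le (v - m)).
  assert (Hm := exp_pos m). rewrite E1, E2.
  assert (exp m * (1 + (u - m)) <= exp m * exp (u - m)) by (apply Rmult_le_compat_l; lra).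
  assert (exp m * (1 + (v - m)) <= exp m * exp (v - m)) by (apply Rmult_le_compat_l; lra).
  assert (s * (exp m * (1 + (u - m))) + (1 - s) * (exp m * (1 + (v - m))) = exp m)
    by (unfold m; ring).
  nra.
Qed.

Lemma young_exp p q a b u : 1 < p -> 0 < q -> 1 / p + 1 / q = 1 ->
  exp (- a / p - b / q) <= / p * exp (- a) * exp (p * u) + / q * exp (- b) * exp (- q * u).
Proof.
  intros Hp Hq Hpq.
  assert (Hs : 0 <= 1 / p <= 1).
  { assert (0 < 1 / q) by (apply Rdiv_lt_0_compat; lra).
    split; [left; apply Rdiv_lt_0_compat|]; lra. }
  assert (H := exp_convex (1 / p) (p * u - a) (- q * u - b) Hs).
  replace (1 - 1 / p) with (1 / q) in H by lra.
  replace (1 / p * (p * u - a) + 1 / q * (- q * u - b)) with (- a / p - b / q) in H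
    by (field; lra).
  replace (exp (p * u - a)) with (exp (- a) * exp (p * u)) in H
    by (rewrite <- exp_plus; f_equal; ring).
  replace (exp (- q * u - b)) with (exp (- b) * exp (- q * u)) in H
    by (rewrite <- exp_plus; f_equal; ring).
  unfold Rdiv in H. rewrite !Rmult_1_l in H. rewrite !Rmult_assoc. exact H.
Qed.

Lemma cint_exp_pos U HU c h m M : 0 < h -> (forall t, m <= U t <= M) ->
  0 < cint (fun t => exp (c * U t)) (exp_c_continuity U c HU) 0 h.
Proof.
  intros Hh Hb. set (B := Rabs m + Rabs M).
  apply Rlt_le_trans with (exp (- (Rabs c * B)) * (h - 0)).
  { apply Rmult_lt_0_compat; [apply exp_pos|lra]. }
  apply cint_lb; [lra|]. intros x _. apply exp_le.
  destruct (Hb x). assert (Hm := Rle_abs (- m)). assert (HM := Rle_abs M).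
  rewrite Rabs_Ropp in Hm. assert (Hc1 := Rle_abs c). assert (Hc2 := Rle_abs (- c)).
  rewrite Rabs_Ropp in Hc2. assert (0 <= Rabs m) by apply Rabs_pos.
  assert (0 <= Rabs M) by apply Rabs_pos. unfold B. nra.
Qed.

Lemma holder_period U (HU : continuity U) p q h m M :
  1 < p -> 0 < q -> 1 / p + 1 / q = 1 -> 0 < h -> (forall t, m <= U t <= M) ->
  ln h <= 1 / p * ln (cint (fun t => exp (p * U t)) (exp_c_continuity U p HU) 0 h)
        + 1 / q * ln (cint (fun t => exp (- q * U t)) (exp_c_continuity U (- q) HU) 0 h).
Proof.
  intros Hp Hq Hpq Hh Hb.
  set (F1 := cint (fun t => exp (p * U t)) (exp_c_continuity U p HU) 0 h).
  set (F2 := cint (fun t => exp (- q * U t)) (exp_c_continuity U (- q) HU) 0 h).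
  assert (P1 : 0 < F1) by (apply (cint_exp_pos U HU p h m M); auto).
  assert (P2 : 0 < F2) by (apply (cint_exp_pos U HU (- q) h m M); auto).
  set (a := ln F1). set (b := ln F2). set (K := exp (- a / p - b / q)).
  (* Integrating Young's inequality: K h <= F1 e^{-a} / p + F2 e^{-b} / q = 1. *)
  set (c1 := / p * exp (- a)). set (c2 := / q * exp (- b)).
  assert (Hs1 : continuity (fun t => c1 * exp (p * U t)))
    by apply (continuity_scal _ c1), exp_c_continuity, HU.
  assert (Hs2 : continuity (fun t => c2 * exp (- q * U t)))
    by apply (continuity_scal _ c2), exp_c_continuity, HU.
  assert (Hsum : continuity (fun t => c1 * exp (p * U t) + 1 * (c2 * exp (- q * U t))))
    by (apply (continuity_plus _ (fun t => 1 * (c2 * exp (- q * U t)))); auto;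
        apply (continuity_scal _ 1); auto).
  assert (Hint : K * (h - 0) <= cint _ Hsum 0 h).
  { apply cint_lb; [lra|]. intros t _. unfold K, c1, c2.
    assert (H := young_exp p q a b (U t) Hp Hq Hpq). lra. }
  rewrite (cint_lin _ _ Hs1 Hs2 1 Hsum 0 h),
    (cint_scal _ (exp_c_continuity U p HU) c1 Hs1 0 h),
    (cint_scal _ (exp_c_continuity U (- q) HU) c2 Hs2 0 h) in Hint by lra.
  fold F1 F2 in Hint.
  assert (EA : c1 * F1 = / p) by (unfold c1, a; rewrite exp_Ropp, exp_ln; auto; field; lra).
  assert (EB : c2 * F2 = / q) by (unfold c2, b; rewrite exp_Ropp, exp_ln; auto; field; lra).
  assert (HK : ln (K * h) <= ln 1)
    by (apply ln_le; [apply Rmult_lt_0_compat; [apply exp_pos|lra]|unfold Rdiv in Hpq; lra]).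
  rewrite ln_mult, ln_1 in HK by (try apply exp_pos; lra).
  unfold K in HK. rewrite ln_exp in HK. unfold Rdiv in HK. fold a b. lra.
Qed.

Lemma blocks_lower p n c k0 M w
  (HL : continuity (fun t => exp (c * logF p n t)))
  (HU : continuity (fun t => exp (c * Ulog n t))) :
  (1 <= n)%nat -> INR k0 * step n + INR M * step n <= PI ->
  (forall j t, (j < M)%nat -> INR (k0 + j) * step n <= t <= INR (k0 + j) * step n + step n ->
     w j <= exp (c * Dlog p n t)) ->
  rsum w M * cint _ HU 0 (step n) <= cint _ HL 0 PI.
Proof.
  intros Hn Hfit Hw. assert (Hh := step_pos n Hn). set (h := step n) in *.
  assert (Ha : 0 <= INR k0 * h) by (apply Rmult_le_pos; [apply pos_INR|lra]).
  assert (HM : 0 <= INR M * h) by (apply Rmult_le_pos; [apply pos_INR|lra]).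
  apply Rle_trans with (cint _ HL (INR k0 * h) (INR k0 * h + INR M * h)).
  2:{ apply cint_sub; try lra. intros; left; apply exp_pos. }
  rewrite cint_blocks, Rmult_comm, <- rsum_scal by lra.
  apply rsum_le; intros j Hj.
  assert (Ek : INR k0 * h + INR j * h = INR (k0 + j) * h) by (rewrite plus_INR; ring).
  assert (Hkj : 0 <= INR (k0 + j) * h) by (apply Rmult_le_pos; [apply pos_INR|lra]).
  rewrite Ek, Rmult_comm,
    <- (cint_periodic _ HU h (k0 + j)) by (auto; intros; rewrite Ulog_periodic; auto).
  assert (HcU : continuity (fun t => w j * exp (c * Ulog n t)))
    by apply (continuity_scal _ (w j) HU).
  rewrite <- (cint_scal _ HU (w j) HcU) by lra.
  apply cint_mono; [lra|]. intros t Ht.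
  unfold logF. rewrite Rmult_plus_distr_l, exp_plus, (Rmult_comm (exp (c * Ulog n t))).
  apply Rmult_le_compat_r; [left; apply exp_pos|]. apply Hw; auto.
Qed.

Lemma integral_p_lower p n M
  (HL : continuity (fun t => exp (p * logF p n t)))
  (HU : continuity (fun t => exp (p * Ulog n t))) :
  1 < p -> (2 <= n)%nat -> (M <= n)%nat -> (INR M + 3) * step n <= PI / 2 ->
  rsum (fun i => block_const (theta p * p) (S i) (step n)) M * cint _ HU 0 (step n)
    <= cint _ HL 0 PI.
Proof.
  intros Hp Hn2 HMn Hc. assert (Hn : (1 <= n)%nat) by lia.
  assert (Hh := step_pos n Hn). assert (Enh := n_step n Hn). assert (HP := PI_gt3).
  rewrite (rsum_rev (fun i => block_const (theta p * p) (S i) (step n))).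
  apply (blocks_lower p n p (n - M) M); auto.
  - rewrite minus_INR by lia. lra.
  - intros j t Hj Ht. replace (S (M - 1 - j)) with (M - j)%nat by lia.
    assert (INR (M - j) <= INR M) by (apply le_INR; lia).
    rewrite plus_INR, minus_INR in Ht by lia.
    apply block_near_pi; auto; try lia; [nra|]. rewrite minus_INR by lia. nra.
Qed.

Lemma integral_dual_lower p n M
  (HL : continuity (fun t => exp (- pconj p * logF p n t)))
  (HU : continuity (fun t => exp (- pconj p * Ulog n t))) :
  1 < p -> (2 <= n)%nat -> (INR M + 3) * step n <= PI / 2 ->
  rsum (fun i => block_const (theta p * pconj p) (S i) (step n)) M * cint _ HU 0 (step n)
    <= cint _ HL 0 PI.
Proof.
  intros Hp Hn2 Hc. assert (Hn : (1 <= n)%nat) by lia.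
  assert (Hh := step_pos n Hn). assert (HP := PI_gt3).
  apply (blocks_lower p n (- pconj p) 1 M); auto.
  - simpl INR. assert (0 <= INR M) by apply pos_INR. nra.
  - intros j t Hj Ht. assert (INR (S j) <= INR M) by (apply le_INR; lia).
    replace (1 + j)%nat with (S j) in Ht by lia.
    apply block_near_0; auto; rewrite S_INR in *; [nra|lra].
Qed.

Lemma ln2_pos : 0 < ln 2.
Proof. rewrite <- ln_1. apply ln_increasing; lra. Qed.

Lemma block_const_ge g i h : 0 < g <= 1 -> 0 < h -> (INR i + 2) * h <= PI / 2 ->
  / 4 <= block_const g i h.
Proof.
  intros Hg Hh Hb. unfold block_const. assert (HP := PI_4). assert (Hl := ln2_pos).
  assert (Hi : 0 <= INR i) by apply pos_INR.
  assert (HX : ln ((INR i + 2) * h) <= ln 2) by (apply ln_le; nra).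
  assert (E4 : exp (- (2 * ln 2)) = / 4).
  { rewrite exp_Ropp. f_equal. replace (2 * ln 2) with (ln 2 + ln 2) by ring.
    rewrite exp_plus, exp_ln; lra. }
  rewrite <- E4. apply exp_le.
  destruct (Rle_lt_dec (ln ((INR i + 2) * h) + ln 2 / 2) 0); nra.
Qed.

Lemma block_const_one i h : 0 < h ->
  block_const 1 i h = exp (- (ln 2 / 2)) * / ((INR i + 2) * h).
Proof.
  intros Hh. unfold block_const. assert (Hi : 0 <= INR i) by apply pos_INR.
  transitivity (exp (- (ln 2 / 2) + - ln ((INR i + 2) * h))); [f_equal; ring|].
  rewrite exp_plus, (exp_Ropp (ln _)), exp_ln; auto. apply Rmult_lt_0_compat; lra.
Qed.

Definition harm (M : nat) : R := rsum (fun i => / (INR (S i) + 2)) M.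

Lemma harm_lower M : ln (INR M + 3) - ln 3 <= harm M.
Proof.
  induction M; [unfold harm; simpl; replace (0 + 3) with 3 by ring; lra|].
  change (harm (S M)) with (harm M + / (INR (S M) + 2)). rewrite S_INR.
  assert (Hm : 0 <= INR M) by apply pos_INR.
  assert (Hx : 0 < / (INR M + 3)) by (apply Rinv_0_lt_compat; lra).
  (* ln (1 + x) <= x *)
  assert (H1 : ln (1 + / (INR M + 3)) <= / (INR M + 3))
    by (rewrite <- (ln_exp (/ (INR M + 3))) at 2; apply ln_le; [lra|apply exp_ineq1_le]).
  replace (INR M + 1 + 3) with ((INR M + 3) * (1 + / (INR M + 3))) by (field; lra).
  replace (INR M + 1 + 2) with (INR M + 3) by ring.
  rewrite ln_mult by lra. lra.
Qed.

Lemma harm_unbounded X : exists M0 : nat, forall M, (M0 <= M)%nat -> X < harm M.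
Proof.
  destruct (INR_unbounded (3 * exp X)) as [M0 HM0]. exists M0. intros M HM.
  assert (HMM : INR M0 <= INR M) by (apply le_INR; auto).
  assert (H3 : 0 < 3 * exp X) by (assert (H := exp_pos X); lra).
  assert (Hl : ln (3 * exp X) < ln (INR M + 3))
    by (apply ln_increasing; auto; assert (H := pos_INR M); lra).
  rewrite ln_mult, ln_exp in Hl by (try apply exp_pos; lra).
  assert (H := harm_lower M). lra.
Qed.

Lemma block_sum_ge g n M : 0 < g <= 1 -> (1 <= n)%nat -> (INR M + 3) * step n <= PI / 2 ->
  INR M / 4 <= rsum (fun i => block_const g (S i) (step n)) M.
Proof.
  intros Hg Hn Hc. assert (Hh := step_pos n Hn).
  unfold Rdiv. rewrite <- rsum_const. apply rsum_le. intros i Hi. apply block_const_ge; auto.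
  assert (INR (S i) <= INR M) by (apply le_INR; lia). nra.
Qed.

Lemma block_sum_harm n M : (1 <= n)%nat ->
  rsum (fun i => block_const 1 (S i) (step n)) M = exp (- (ln 2 / 2)) * / step n * harm M.
Proof.
  intros Hn. assert (Hh := step_pos n Hn). unfold harm. rewrite <- rsum_scal.
  apply rsum_ext; intros i Hi. rewrite block_const_one by auto.
  assert (0 <= INR (S i)) by apply pos_INR. field. split; lra.
Qed.

Lemma log_product_lower a b h Sa Sb F1 F2 I1 I2 :
  0 < a -> 0 < b -> a + b = 1 -> 0 < h -> 0 < Sa -> 0 < Sb -> 0 < F1 -> 0 < F2 ->
  ln h <= a * ln F1 + b * ln F2 -> Sa * F1 <= I1 -> Sb * F2 <= I2 ->
  - ln PI + a * ln Sa + b * ln Sb + ln h <= a * ln (/ PI * I1) + b * ln (/ PI * I2).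
Proof.
  intros Ha Hb Hab Hh HSa HSb HF1 HF2 Hhol HI1 HI2. assert (HP := PI_gt3).
  assert (Hpi : 0 < / PI) by (apply Rinv_0_lt_compat; lra).
  assert (Hlog : forall S F I, 0 < S -> 0 < F -> S * F <= I ->
            - ln PI + ln S + ln F <= ln (/ PI * I)).
  { intros S F I HS HF HI.
    assert (HPS : 0 < / PI * S) by (apply Rmult_lt_0_compat; lra).
    rewrite <- ln_Rinv, <- !ln_mult by lra.
    apply ln_le; [apply Rmult_lt_0_compat; lra|].
    rewrite Rmult_assoc. apply Rmult_le_compat_l; lra. }
  assert (L1 := Hlog Sa F1 I1 HSa HF1 HI1). assert (L2 := Hlog Sb F2 I2 HSb HF2 HI2).
  assert (a * (- ln PI + ln Sa + ln F1) <= a * ln (/ PI * I1)) by (apply Rmult_le_compat_l; lra).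
  assert (b * (- ln PI + ln Sb + ln F2) <= b * ln (/ PI * I2)) by (apply Rmult_le_compat_l; lra).
  nra.
Qed.

Definition C0 : R := ln PI + ln 4 + ln 2.

Lemma block_sums_lower a b h M H Sa Sb :
  0 < a -> 0 < b -> a + b = 1 -> 0 < h -> 1 <= h * M -> 1 <= H ->
  M / 4 <= Sa -> M / 4 <= Sb ->
  (Sa = exp (- (ln 2 / 2)) * / h * H \/ Sb = exp (- (ln 2 / 2)) * / h * H) ->
  - C0 + Rmin a b * ln H <= - ln PI + a * ln Sa + b * ln Sb + ln h.
Proof.
  intros Ha Hb Hab Hh HhM HH HSa HSb Hcase. assert (HP := PI_gt3). assert (Hl2 := ln2_pos).
  assert (HM : 0 < M) by (apply Rmult_lt_reg_l with h; nra).
  assert (Hln : 0 <= ln H) by (rewrite <- ln_1; apply ln_le; lra).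
  assert (HhM' : 0 <= ln h + ln M) by (rewrite <- ln_mult, <- ln_1 by lra; apply ln_le; lra).
  assert (HM4 : forall S, M / 4 <= S -> ln M - ln 4 <= ln S).
  { intros S HS. unfold Rminus. rewrite <- ln_Rinv, <- ln_mult by (try apply Rinv_0_lt_compat; lra).
    apply ln_le; [apply Rmult_lt_0_compat; [|apply Rinv_0_lt_compat]|]; lra. }
  assert (La := HM4 Sa HSa). assert (Lb := HM4 Sb HSb).
  assert (Hc : forall S, S = exp (- (ln 2 / 2)) * / h * H -> ln S = - (ln 2 / 2) - ln h + ln H).
  { intros S ->. rewrite !ln_mult, ln_exp, ln_Rinv by
      (try apply Rmult_lt_0_compat; try apply exp_pos; try apply Rinv_0_lt_compat; lra).
    ring. }
  assert (Hln4 : 0 < ln 4) by (rewrite <- ln_1; apply ln_increasing; lra).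
  assert (Hmin : Rmin a b <= a /\ Rmin a b <= b) by (split; [apply Rmin_l|apply Rmin_r]).
  assert (Hk : Rmin a b * ln H <= a * ln H /\ Rmin a b * ln H <= b * ln H) by (split; nra).
  unfold C0. destruct Hcase as [E|E]; apply Hc in E; nra.
Qed.

Lemma char_log_lower p n M
  (HL1 : continuity (fun t => exp (p * logF p n t)))
  (HL2 : continuity (fun t => exp (- pconj p * logF p n t))) :
  1 < p -> (2 <= n)%nat -> (M <= n)%nat -> (INR M + 3) * step n <= PI / 2 ->
  1 <= step n * INR M -> 1 <= harm M ->
  - C0 + Rmin (1 / p) ((p - 1) / p) * ln (harm M) <=
  1 / p * ln (/ PI * cint _ HL1 0 PI) + (p - 1) / p * ln (/ PI * cint _ HL2 0 PI).
Proof.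
  intros Hp Hn2 HMn Hc HhM HH. assert (Hn : (1 <= n)%nat) by lia.
  assert (Hh := step_pos n Hn). assert (HU := Ulog_continuity n Hn).
  assert (Hpc := pconj_gt1 p Hp).
  assert (Epc : 1 / pconj p = (p - 1) / p) by (unfold pconj; field; lra).
  assert (Hsum : 1 / p + 1 / pconj p = 1) by (rewrite Epc; field; lra).
  assert (Hb := fun t => Ulog_bounds n t Hn).
  assert (Hhol := holder_period (Ulog n) HU p (pconj p) (step n) _ _ Hp ltac:(lra) Hsum Hh Hb).
  rewrite Epc in Hhol.
  destruct (theta_exponents p Hp) as [Ha [Hb' Hone]].
  apply Rle_trans with
    (- ln PI + 1 / p * ln (rsum (fun i => block_const (theta p * p) (S i) (step n)) M)
     + (p - 1) / p * ln (rsum (fun i => block_const (theta p * pconj p) (S i) (step n)) M)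
     + ln (step n)).
  - apply (block_sums_lower _ _ _ (INR M)); auto.
    + apply Rdiv_lt_0_compat; lra.
    + apply Rdiv_lt_0_compat; lra.
    + field; lra.
    + apply block_sum_ge; auto.
    + apply block_sum_ge; auto.
    + destruct Hone as [E|E]; [left|right]; rewrite E; apply block_sum_harm; auto.
  - assert (HM4 : 0 < INR M / 4) by (assert (0 < INR M) by nra; lra).
    apply (log_product_lower _ _ _ _ _
             (cint _ (exp_c_continuity _ p HU) 0 (step n))
             (cint _ (exp_c_continuity _ (- pconj p) HU) 0 (step n))); auto.
    + apply Rdiv_lt_0_compat; lra.
    + apply Rdiv_lt_0_compat; lra.
    + field; lra.
    + apply Rlt_le_trans with (INR M / 4); auto. apply block_sum_ge; auto.
    + apply Rlt_le_trans with (INR M / 4); auto. apply block_sum_ge; auto.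
    + apply (cint_exp_pos _ HU p _ _ _ Hh Hb).
    + apply (cint_exp_pos _ HU (- pconj p) _ _ _ Hh Hb).
    + apply integral_p_lower; auto.
    + apply integral_dual_lower; auto.
Qed.

Lemma block_choice m : (22 <= m)%nat -> exists M : nat,
  (M <= m)%nat /\ (m <= 2 * M + 7)%nat /\ (INR M + 3) * step m <= PI / 2 /\ 1 <= step m * INR M.
Proof.
  intros Hm. assert (E := Nat.div_mod_eq m 2). assert (Hr := Nat.mod_upper_bound m 2 ltac:(lia)).
  set (d := (m / 2)%nat) in *. set (r := (m mod 2)%nat) in *.
  exists (d - 3)%nat. assert (Hm1 : (1 <= m)%nat) by lia.
  assert (Hh := step_npts m Hm1). assert (Hhp := step_pos m Hm1). assert (HP := PI_gt3).
  unfold npts in Hh.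
  assert (Em : INR m = 2 * INR d + INR r) by (rewrite E at 1; rewrite plus_INR, mult_INR; simpl; lra).
  assert (Hr' : INR r <= 1) by (assert (H := le_INR r 1 ltac:(lia)); simpl in H; lra).
  assert (Hr0 : 0 <= INR r) by apply pos_INR.
  assert (Hd11 : 11 <= INR d) by (assert (H := le_INR 11 d ltac:(lia)); simpl in H; lra).
  rewrite minus_INR by lia. simpl (INR 3).
  split; [lia|]. split; [lia|]. split; nra.
Qed.

Lemma char_unbounded p K : 1 < p -> exists N : nat, forall m
  (HL1 : continuity (fun t => exp (p * logF p m t)))
  (HL2 : continuity (fun t => exp (- pconj p * logF p m t))), (N <= m)%nat ->
  K < Rpower (/ PI * cint _ HL1 0 PI) (1 / p) * Rpower (/ PI * cint _ HL2 0 PI) ((p - 1) / p).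
Proof.
  intros Hp. assert (HP := PI_gt3). assert (Hl2 := ln2_pos).
  set (kap := Rmin (1 / p) ((p - 1) / p)).
  assert (Hkap : 0 < kap) by (unfold kap; apply Rmin_case; apply Rdiv_lt_0_compat; lra).
  assert (HK : 0 <= ln (Rabs K + 1))
    by (rewrite <- ln_1; apply ln_le; [lra|assert (H := Rabs_pos K); lra]).
  assert (HC0 : 0 < C0).
  { unfold C0. assert (0 < ln 4) by (rewrite <- ln_1; apply ln_increasing; lra).
    assert (0 < ln PI) by (rewrite <- ln_1; apply ln_increasing; lra). lra. }
  set (A := (ln (Rabs K + 1) + C0) / kap).
  assert (HA : 0 < A) by (apply Rdiv_lt_0_compat; lra).
  destruct (harm_unbounded (exp A)) as [M0 HM0].
  exists (2 * M0 + 22)%nat. intros m HL1 HL2 Hm.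
  destruct (block_choice m ltac:(lia)) as [M [HMm [HmM [Hc HhM]]]].
  assert (HH : exp A < harm M) by (apply HM0; lia).
  assert (HeA : 1 < exp A) by (rewrite <- exp_0; apply exp_increasing; auto).
  assert (Hb := char_log_lower p m M HL1 HL2 Hp ltac:(lia) HMm Hc HhM ltac:(lra)).
  fold kap in Hb.
  (* kap ln (harm M) > kap A = ln (|K| + 1) + C0 *)
  assert (HlnH : A < ln (harm M)) by (rewrite <- (ln_exp A); apply ln_increasing; auto; apply exp_pos).
  assert (HkA : kap * A = ln (Rabs K + 1) + C0) by (unfold A; field; lra).
  unfold Rpower. rewrite <- exp_plus.
  apply Rlt_le_trans with (exp (ln (Rabs K + 1))).
  { rewrite exp_ln by (assert (H1 := Rabs_pos K); lra). assert (H1 := RRle_abs K). lra. }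
  apply exp_le. rewrite (Rmult_comm (1 / p)), (Rmult_comm ((p - 1) / p)). nra.
Qed.

Lemma wp_eq p n t : (1 <= n)%nat -> wp p n t = exp (p * logF p n t).
Proof. intros Hn. unfold wp, Rpower. rewrite absF_eq, ln_exp by auto. reflexivity. Qed.

Lemma wdual_eq p n t : (1 <= n)%nat -> wdual p n t = exp (- pconj p * logF p n t).
Proof. intros Hn. unfold wdual, Rpower, pconj. rewrite absF_eq, ln_exp by auto. reflexivity. Qed.

Lemma RiemannInt_cint f g Hg a b (pr : Riemann_integrable f a b) :
  a <= b -> (forall t, f t = g t) -> RiemannInt pr = cint g Hg a b.
Proof.
  intros H E. to_riemann g Hg a b H. apply RiemannInt_P18; auto.
Qed.

Theorem mainTheorem3 (p : R) (hp1 : 1 < p) :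
  (forall n : nat, (1 <= n)%nat -> inhabited (Riemann_integrable (wp p n) 0 PI)) /\
  (forall n : nat, (1 <= n)%nat -> inhabited (Riemann_integrable (wdual p n) 0 PI)) /\
  (forall (pr1 : forall n : nat, Riemann_integrable (wp p (S n)) 0 PI)
          (pr2 : forall n : nat, Riemann_integrable (wdual p (S n)) 0 PI),
     cv_infty (fun n : nat =>
       Rpower (/ PI * RiemannInt (pr1 n)) (1 / p) *
       Rpower (/ PI * RiemannInt (pr2 n)) ((p - 1) / p))).
Proof.
  assert (HP : 0 <= PI) by (left; apply PI_RGT_0).
  assert (HL1 : forall n, (1 <= n)%nat -> continuity (fun t => exp (p * logF p n t)))
    by (intros; apply exp_c_continuity, logF_continuity; auto).
  assert (HL2 : forall n, (1 <= n)%nat -> continuity (fun t => exp (- pconj p * logF p n t)))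
    by (intros; apply exp_c_continuity, logF_continuity; auto).
  split; [|split].
  - intros n Hn. constructor.
    apply (@Riemann_integrable_ext _ _ 0 PI (fun t _ => eq_sym (wp_eq p n t Hn))).
    apply (cint_integrable _ (HL1 n Hn)), HP.
  - intros n Hn. constructor.
    apply (@Riemann_integrable_ext _ _ 0 PI (fun t _ => eq_sym (wdual_eq p n t Hn))).
    apply (cint_integrable _ (HL2 n Hn)), HP.
  - intros pr1 pr2 K. destruct (char_unbounded p K hp1) as [N HN].
    exists N. intros n Hn. assert (Hn1 : (1 <= S n)%nat) by lia.
    rewrite (RiemannInt_cint _ _ (HL1 _ Hn1) _ _ (pr1 n) HP (fun t => wp_eq p _ t Hn1)),
      (RiemannInt_cint _ _ (HL2 _ Hn1) _ _ (pr2 n) HP (fun t => wdual_eq p _ t Hn1)).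
    apply HN; lia.
Qed.
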